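(* Let $p$ be a prime and $n\ge1$, and suppose $p^n-1=st$ with positive integers $s<t$ and $\gcd(s,t)=1$. Let $\alpha$ be a generator of $\mathbb{F}_{p^n}^\times$, $\beta=\alpha^t$, $\gamma=\alpha^s$. Let $S_1,S_2\subset\mathbb{Z}_s\times\mathbb{Z}_t$ be two disjoint linearly independent patterns, of sizes $m_1$ and $m_2$ respectively, and let $V_1,V_2\subset\mathbb{F}_{p^n}$ be the $\mathbb{F}_p$-spans of $A|_{S_1}$ and $A|_{S_2}$. Suppose $\dim_{\mathbb{F}_p}V_1+\dim_{\mathbb{F}_p}V_2\le n$. Then there exists $(a,b)\in\mathbb{Z}_s\times\mathbb{Z}_t$ such that $T_{a,b}(S_2)$ is disjoint from $S_1$ and the pattern $S_1\cup T_{a,b}(S_2)$ is linearly independent.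
   Context: $\mathbb{Z}_s=\mathbb{Z}/s\mathbb{Z}$, $\mathbb{Z}_t=\mathbb{Z}/t\mathbb{Z}$; $(i,j)\mapsto\beta^i\gamma^j$ is a well-defined bijection $\mathbb{Z}_s\times\mathbb{Z}_t\to\mathbb{F}_{p^n}^\times$. A pattern is a subset $S\subset\mathbb{Z}_s\times\mathbb{Z}_t$, and $A|_S=\{\beta^i\gamma^j:(i,j)\in S\}$. $S$ is a linearly independent pattern if the $|S|$ elements of $A|_S$ are linearly independent over $\mathbb{F}_p$. The toroidal translation $T_{a,b}:\mathbb{Z}_s\times\mathbb{Z}_t\to\mathbb{Z}_s\times\mathbb{Z}_t$ is $T_{a,b}(i,j)=(i+a \bmod s,\ j+b\bmod t)$. *)

From HB Require Import structures.
From mathcomp Require Import all_boot all_order all_algebra all_field.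
Set Implicit Arguments. Unset Strict Implicit. Unset Printing Implicit Defensive.
Import GRing.Theory.
Local Open Scope ring_scope.

Definition ordD (n : nat) (i : 'I_n) (a : nat) : 'I_n :=
  Ordinal (ltn_pmod (i + a) (leq_ltn_trans (leq0n i) (ltn_ord i))).

Definition torT (s t : nat) (a : 'I_s) (b : 'I_t) (x : 'I_s * 'I_t) : 'I_s * 'I_t :=
  (ordD x.1 a, ordD x.2 b).

Definition torTset (s t : nat) (a : 'I_s) (b : 'I_t) (S : {set 'I_s * 'I_t})
  : {set 'I_s * 'I_t} := [set torT a b x | x in S].

Definition Aseq (p : nat) (L : fieldExtType 'F_p) (s t : nat)
  (beta gamma : L) (S : {set 'I_s * 'I_t}) : seq L :=
  [seq beta ^+ (nat_of_ord x.1) * gamma ^+ (nat_of_ord x.2) | x : 'I_s * 'I_t <- enum S].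

Definition lin_indep_pattern (p : nat) (L : fieldExtType 'F_p) (s t : nat)
  (beta gamma : L) (S : {set 'I_s * 'I_t}) : bool :=
  free (Aseq beta gamma S).

Definition mult_generator (p : nat) (L : fieldExtType 'F_p) (alpha : L) : Prop :=
  alpha != 0 /\ forall x : L, x != 0 -> exists k : nat, x = alpha ^+ k.

From HB Require Import structures.
From mathcomp Require Import all_boot all_order all_algebra all_field.
From mathcomp Require Import zify.
Import GRing.Theory.
Local Open Scope ring_scope.

(* A nonzero c with c V2 meeting V1 nontrivially is a quotient v1 / v2 of
   nonzero vectors of V1 and V2; there are at most (p^d1 - 1)(p^d2 - 1) such
   quotients, fewer than the p^n - 1 nonzero elements of the field, so some
   c != 0 has V1 :&: c V2 = 0.  As gcd(s, t) = 1, the Chinese remainder theorem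
   writes c = beta^a gamma^b, and since beta^s = gamma^t = 1, multiplying A|_S2
   by c gives A|_(T_{a,b} S2).  Hence A|_S1 followed by c A|_S2 is free; its
   entries are then pairwise distinct, which also gives the disjointness of S1
   and T_{a,b} S2. *)

Lemma ltn_mul_expn_sub1 (p d1 d2 n : nat) : (1 < p)%N -> (0 < n)%N ->
  (d1 + d2 <= n)%N -> ((p ^ d1 - 1) * (p ^ d2 - 1) < p ^ n - 1)%N.
Proof.
move=> p_gt1 n_gt0 le_dn.
have le1pd1 : (1 <= p ^ d1)%N by rewrite expn_gt0; lia.
have le1pd2 : (1 <= p ^ d2)%N by rewrite expn_gt0; lia.
have le_pd_pn : (p ^ d1 * p ^ d2 <= p ^ n)%N by rewrite -expnD leq_pexp2l //; lia.
have lt1pn : (1 < p ^ n)%N by rewrite -(exp1n n) ltn_exp2r; lia.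
nia.
Qed.

Section FinFieldExt.
Context {F : finFieldType} {L : fieldExtType F}.
Let L' := finvect_type L.

Lemma card_finvect : #|L'| = (#|F| ^ \dim {:L})%N.
Proof. by rewrite -(@card_vspacef _ L' (Vector.class L')) card_vspace. Qed.

Lemma card_vspace_nz (U : {vspace L}) :
  #|[set u : L' | (u \in U) && (u != 0)]| = (#|F| ^ \dim U - 1)%N.
Proof.
transitivity #|(U : {pred L'})|.-1; last by rewrite card_vspace subn1.
rewrite [in RHS](cardD1 0) mem0v /=.
by apply: eq_card => u; rewrite !inE andbC.
Qed.

Lemma expf_card_dimv_sub1 (x : L) : x != 0 -> x ^+ (#|F| ^ \dim {:L} - 1) = 1.
Proof.
move=> x_nz; have := @expf_card _ (x : L').
rewrite card_finvect; have : (0 < #|F| ^ \dim {:L})%N by rewrite expn_gt0 (ltnW (finNzRing_gt1 F)).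
case: (_ ^ _)%N => // m _ xm; rewrite subSS subn0.
by apply: (mulfI x_nz); rewrite mulr1 -exprS.
Qed.

Lemma exists_mul_capv0 (U V : {vspace L}) : (\dim U + \dim V <= \dim {:L})%N ->
  exists2 c : L, c != 0 & (U :&: amull c @: V)%VS = 0%VS.
Proof.
move=> le_dim.
pose nz (W : {vspace L}) := [set w : L' | (w \in W) && (w != 0)].
pose bad := [set x.1 / x.2 | x in setX (nz U) (nz V)].
have lt_bad : (#|bad| < #|[set~ (0%R : L')]|)%N.
  apply: leq_ltn_trans (leq_imset_card _ _) _.
  rewrite cardsX !card_vspace_nz cardsC1 card_finvect -subn1.
  by apply: ltn_mul_expn_sub1; rewrite ?finNzRing_gt1 ?adim_gt0.
have [c] : exists2 c, c \in [set~ (0%R : L')] & c \notin bad.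
  by apply/subsetPn; apply: contraTN lt_bad => /subset_leq_card; rewrite leqNgt.
rewrite !inE => c_nz c_good; exists c => //.
apply/eqP; rewrite -subv0; apply/subvP => v /memv_capP[vU /memv_imgP[w wV]].
rewrite lfunE /= => def_v; rewrite memv0; apply: contraNT c_good => v_nz.
have w_nz : w != 0 by apply: contraNneq v_nz => w0; rewrite def_v w0 mulr0.
apply/imsetP; exists (v, w); last by rewrite /= def_v mulfK.
by rewrite !inE vU v_nz wV w_nz.
Qed.

End FinFieldExt.

Lemma free_cat_mull (K : fieldType) (A : falgType K) (X Y : seq A) (c : A) :
  c \is a GRing.unit -> free X -> free Y ->
  (<<X>> :&: amull c @: <<Y>>)%VS = 0%VS -> free (X ++ map ( *%R c) Y).
Proof.
move=> c_unit freeX freeY capXY.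
have -> : map ( *%R c) Y = map (amull c) Y by apply: eq_map => y; rewrite lfunE.
rewrite cat_free -limg_span; apply/and3P; split => //; last exact/directv_addP.
rewrite /free -limg_span limg_dim_eq ?size_map //.
by rewrite (eqP (lker0_amull c_unit)) capv0.
Qed.

Section EnumSetU.
Context {T T' : finType} {f : T' -> T} {A : {set T}} {B : {set T'}}.
Hypothesis uniq_AfB : uniq (enum A ++ map f (enum B)).

Lemma perm_enum_setU_imset : perm_eq (enum (A :|: f @: B)) (enum A ++ map f (enum B)).
Proof.
apply: uniq_perm (enum_uniq _) uniq_AfB _ => y.
rewrite mem_enum mem_cat mem_enum in_setU; congr (_ || _).
by apply/imsetP/mapP => -[x xB ->]; exists x; rewrite ?mem_enum in xB *.
Qed.

Lemma disjoint_imset_of_uniq : [disjoint A & f @: B].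
Proof.
apply/pred0P => y /=; apply/negbTE/andP => -[yA /imsetP[x xB def_y]].
move: uniq_AfB; rewrite cat_uniq => /and3P[_ /hasP[]]; exists y.
  by rewrite def_y map_f ?mem_enum.
by rewrite mem_enum.
Qed.

End EnumSetU.

Section TorusMonomial.
Context {R : comRingType} {s t : nat}.

Definition torus_monomial (beta gamma : R) (x : 'I_s * 'I_t) : R :=
  beta ^+ x.1 * gamma ^+ x.2.

Lemma torus_monomialT (beta gamma : R) (a : 'I_s) (b : 'I_t) :
  beta ^+ s = 1 -> gamma ^+ t = 1 -> forall x,
  torus_monomial beta gamma (torT a b x) =
  torus_monomial beta gamma (a, b) * torus_monomial beta gamma x.
Proof.
move=> beta_s gamma_t x; rewrite /torus_monomial /= !expr_mod // !exprD.
by rewrite mulrACA mulrC.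
Qed.

Lemma exists_torus_monomial_expr (alpha : R) k :
  (0 < s)%N -> (0 < t)%N -> coprime s t -> alpha ^+ (s * t) = 1 ->
  exists (a : 'I_s) (b : 'I_t),
    torus_monomial (alpha ^+ t) (alpha ^+ s) (a, b) = alpha ^+ k.
Proof.
move=> s_gt0 t_gt0 co_st alpha_st.
exists (Ordinal (ltn_pmod (k %% s * (egcdn t s).1) s_gt0)).
exists (Ordinal (ltn_pmod (k %% t * (egcdn s t).1) t_gt0)).
have beta_s : (alpha ^+ t) ^+ s = 1 by rewrite -exprM mulnC.
have gamma_t : (alpha ^+ s) ^+ t = 1 by rewrite -exprM.
rewrite /torus_monomial /= !expr_mod // -!exprM -exprD.
rewrite -(expr_mod _ alpha_st) -[in RHS](expr_mod _ alpha_st).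
rewrite [in RHS](chinese_mod co_st) /chinese.
by congr (alpha ^+ (_ %% _)); rewrite !mulnA (mulnC t) (mulnC s).
Qed.

End TorusMonomial.

Lemma AseqE p (L : fieldExtType 'F_p) (beta gamma : L) (s t : nat)
  (S : {set 'I_s * 'I_t}) :
  Aseq beta gamma S = map (torus_monomial beta gamma) (enum S).
Proof. by []. Qed.

Theorem mainTheorem3 (p n : nat) (L : fieldExtType 'F_p)
  (s t : nat) (alpha : L) (S1 S2 : {set 'I_s * 'I_t}) :
  prime p -> (1 <= n)%N -> \dim {: L} = n ->
  (p ^ n - 1)%N = (s * t)%N -> (0 < s)%N -> (s < t)%N -> coprime s t ->
  mult_generator alpha ->
  [disjoint S1 & S2] ->
  lin_indep_pattern (alpha ^+ t) (alpha ^+ s) S1 ->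
  lin_indep_pattern (alpha ^+ t) (alpha ^+ s) S2 ->
  (\dim <<Aseq (alpha ^+ t) (alpha ^+ s) S1>> +
   \dim <<Aseq (alpha ^+ t) (alpha ^+ s) S2>> <= n)%N ->
  exists (a : 'I_s) (b : 'I_t),
    [disjoint S1 & torTset a b S2] /\
    lin_indep_pattern (alpha ^+ t) (alpha ^+ s) (S1 :|: torTset a b S2).
Proof.
move=> p_pr _ dimL p_st s_gt0 lt_st co_st [alpha_nz alpha_gen] _ free1 free2 le_dim.
rewrite -{}dimL in p_st le_dim.
have alpha_st : alpha ^+ (s * t) = 1.
  by have := expf_card_dimv_sub1 _ alpha_nz; rewrite card_Fp // p_st.
have [c c_nz capc] := exists_mul_capv0 _ _ le_dim.
have [k def_c] := alpha_gen c c_nz.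
have t_gt0 := ltn_trans s_gt0 lt_st.
have [a [b ab_c]] := exists_torus_monomial_expr alpha k s_gt0 t_gt0 co_st alpha_st.
pose Y := enum S1 ++ map (torT a b) (enum S2).
have beta_s : (alpha ^+ t) ^+ s = 1 by rewrite -exprM mulnC.
have gamma_t : (alpha ^+ s) ^+ t = 1 by rewrite -exprM.
have freeY : free (map (torus_monomial (alpha ^+ t) (alpha ^+ s)) Y).
  rewrite map_cat -map_comp (eq_map (torus_monomialT _ _ a b beta_s gamma_t)).
  by rewrite map_comp -AseqE ab_c -def_c free_cat_mull ?unitfE.
have uniqY : uniq Y by exact: map_uniq (free_uniq freeY).
exists a, b; split; first exact: disjoint_imset_of_uniq.
rewrite /lin_indep_pattern AseqE.
by rewrite (perm_free (perm_map _ (perm_enum_setU_imset uniqY))).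
Qed.
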